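(* Let $E$ be a Banach lattice with the property (d), and let $A \subset E$. Then $|A| = \{|x| : x \in A\}$ is an almost Grothendieck set if and only if the solid hull $\mathrm{sol}(A)$ is an almost Grothendieck set.
   Context: Every bounded linear operator $T: E \to c_0$ on a Banach lattice $E$ is of the form $T(x) = (x_n'(x))_n$ for a unique weak* null sequence $(x_n') \subset E'$; $T$ is a disjoint operator if $(x_n')$ is a disjoint sequence in the dual Banach lattice $E'$. A subset $A \subset E$ is almost Grothendieck if $T(A)$ is relatively weakly compact in $c_0$ for every disjoint operator $T: E \to c_0$. $E$ has the property (d) if $|x_n'| \to 0$ weak* in $E'$ for every disjoint weak* null sequence $(x_n')$ in $E'$. The solid hull is $\mathrm{sol}(A) = \{x \in E : |x| \le |y| \text{ for some } y \in A\}$. *)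

From HB Require Import structures.
From mathcomp Require Import all_boot all_order all_algebra.
From mathcomp Require Import all_classical all_reals all_analysis.
Set Implicit Arguments. Unset Strict Implicit. Unset Printing Implicit Defensive.
Import Order.TTheory GRing.Theory Num.Theory.
Import numFieldNormedType.Exports.
Local Open Scope classical_set_scope.
Local Open Scope ring_scope.

(* A (real) Banach lattice: a complete normed space E (the carrier is a
   completeNormedModType R) together with a partial order [ble] that is a
   vector-space order, admits binary suprema [bjoin], and is compatible with the
   norm: |x| <= |y| implies ||x|| <= ||y||, where |x| = x \/ -x. *)
Record BLat (R : realType) (E : completeNormedModType R) := MkBLat {
  ble : E -> E -> Prop;
  bjoin : E -> E -> E;
  ble_refl : forall x, ble x x;
  ble_trans : forall x y z, ble x y -> ble y z -> ble x z;
  ble_anti : forall x y, ble x y -> ble y x -> x = y;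
  ble_add : forall x y z, ble x y -> ble (x + z) (y + z);
  ble_scale : forall (a : R) x y, 0 <= a -> ble x y -> ble (a *: x) (a *: y);
  bjoin_ubl : forall x y, ble x (bjoin x y);
  bjoin_ubr : forall x y, ble y (bjoin x y);
  bjoin_lub : forall x y z, ble x z -> ble y z -> ble (bjoin x y) z;
  bnorm_mono : forall x y, ble (bjoin x (- x)) (bjoin y (- y)) -> `|x| <= `|y|
}.

Section BanachLatticeNotions.
Variables (R : realType) (E : completeNormedModType R) (L : BLat E).

Definition babs (x : E) : E := bjoin L x (- x).

Definition sol (A : set E) : set E :=
  [set x | exists2 y, A y & ble L (babs x) (babs y)].

Definition is_dual (f : E -> R) : Prop :=
  (forall (a : R) (x y : E), f (a *: x + y) = a * f x + f y) /\ continuous f.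

Definition dle (f g : E -> R) : Prop := forall x, ble L 0 x -> f x <= g x.

Definition is_dabs (f h : E -> R) : Prop :=
  [/\ is_dual h, dle f h, dle (fun x => - f x) h &
      forall k, is_dual k -> dle f k -> dle (fun x => - f x) k -> dle h k].

(* f and g are disjoint in E': |f| /\ |g| = 0 in E' *)
Definition ddisjoint (f g : E -> R) : Prop :=
  exists hf hg, [/\ is_dabs f hf, is_dabs g hg &
     forall k, is_dual k -> dle k hf -> dle k hg -> dle k (fun _ => 0)].

Definition weak_star_null (xs : nat -> E -> R) : Prop :=
  forall x, (fun n => xs n x) @ \oo --> (0 : R).

Definition disjoint_seq (xs : nat -> E -> R) : Prop :=
  forall n m : nat, n <> m -> ddisjoint (xs n) (xs m).

End BanachLatticeNotions.

Section C0.
Variable R : realType.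

Definition c0set : set (nat -> R) := [set u | u @ \oo --> (0 : R)].

(* the index set of l1 = (c0)' *)
Definition l1 := {a : nat -> R | cvgn (series (fun n => `|a n|))}.

(* the duality pairing <a, u> = sum_n a_n u_n (genuine for u in c0) *)
Definition c0_pairing (u : nat -> R) : {ptws l1 -> R} :=
  fun a => limn (series (fun n => proj1_sig a n * u n)).

(* nat -> R with the initial topology induced by the pairings with l1; its
   subspace topology on c0 is exactly the weak topology sigma(c0, l1) of c0. *)
Definition c0weak := initial_topology c0_pairing.

(* B is a relatively weakly compact subset of c0: B is contained in a weakly
   compact subset of c0 (the weak topology being Hausdorff, this is the same as
   having weakly compact weak closure). *)
Definition rel_weakly_compact_c0 (B : set (nat -> R)) : Prop :=
  exists K : set c0weak, [/\ K `<=` c0set, compact K & B `<=` K].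

End C0.

Section AlmostGrothendieck.
Variables (R : realType) (E : completeNormedModType R) (L : BLat E).

(* Disjoint operators T : E -> c0 are exactly T x = (x_n'(x))_n for a disjoint
   weak* null sequence (x_n') in E'. *)
Definition almost_grothendieck (A : set E) : Prop :=
  forall xs : nat -> E -> R,
    (forall n, is_dual (xs n)) -> weak_star_null xs -> disjoint_seq L xs ->
    rel_weakly_compact_c0 [set (fun n => xs n x) | x in A].

Definition property_d : Prop :=
  forall xs : nat -> E -> R,
    (forall n, is_dual (xs n)) -> weak_star_null xs -> disjoint_seq L xs ->
    forall hs : nat -> E -> R, (forall n, is_dabs L (xs n) (hs n)) ->
    weak_star_null hs.

End AlmostGrothendieck.

(* For a disjoint weak* null sequence (x_n'), property (d) makes the moduli
   |x_n'| again a disjoint weak* null sequence, so they map |A| into a weakly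
   compact set K of c0.  If |x| <= |y| then |x_n'(x)| <= |x_n'|(|x|) <= |x_n'|(|y|),
   so the (x_n') map sol(A) into the c0 sequences dominated by elements of K.
   This set is weakly compact: along an ultrafilter the dominating sequences
   converge weakly, the coordinates converge by boundedness, and the l1 pairing
   converges because it splits into a finite head and a tail that is uniformly
   small.  The converse holds since |A| is contained in sol(A). *)

From HB Require Import structures.
From mathcomp Require Import all_boot all_order all_algebra.
From mathcomp Require Import all_classical all_reals all_analysis.
From mathcomp Require Import lra.
Import Order.TTheory GRing.Theory Num.Theory.
Import numFieldNormedType.Exports.
Set Implicit Arguments. Unset Strict Implicit. Unset Printing Implicit Defensive.
Local Open Scope classical_set_scope.
Local Open Scope ring_scope.

Section DualFunctional.
Variables (R : realType) (E : completeNormedModType R) (f : E -> R).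
Hypothesis f_dual : is_dual f.

Lemma is_dualD x y : f (x + y) = f x + f y.
Proof. by case: f_dual => f_lin _; have := f_lin 1 x y; rewrite scale1r mul1r. Qed.

Lemma is_dual0 : f 0 = 0.
Proof. by apply/(@addIr _ (f 0)); rewrite -is_dualD !add0r. Qed.

Lemma is_dualZ a x : f (a *: x) = a * f x.
Proof. by case: f_dual => f_lin _; rewrite -[a *: x]addr0 f_lin is_dual0 addr0. Qed.

Lemma is_dualN x : f (- x) = - f x.
Proof. by rewrite -scaleN1r is_dualZ mulN1r. Qed.

Lemma is_dualB x y : f (x - y) = f x - f y.
Proof. by rewrite is_dualD is_dualN. Qed.

End DualFunctional.

Section BanachLattice.
Variables (R : realType) (E : completeNormedModType R) (L : BLat E).

Lemma ble_subr_ge0 x y : ble L x y -> ble L 0 (y - x).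
Proof. by move=> /(ble_add (- x)); rewrite subrr. Qed.

Lemma babsDr_ge0 x : ble L 0 (babs L x + x).
Proof. by have := ble_add x (bjoin_ubr L x (- x)); rewrite addNr. Qed.

Lemma babsBr_ge0 x : ble L 0 (babs L x - x).
Proof. exact/ble_subr_ge0/bjoin_ubl. Qed.

Lemma babs_ge0 x : ble L 0 (babs L x).
Proof.
have sum_ge0 : ble L 0 ((babs L x + x) + (babs L x - x)).
  apply: ble_trans (babsBr_ge0 x) _.
  by have := ble_add (babs L x - x) (babsDr_ge0 x); rewrite add0r.
have -> : babs L x = (2^-1 : R) *: ((babs L x + x) + (babs L x - x)).
  rewrite addrACA subrr addr0 -mulr2n -scalerMnr scalerMnl -mulr_natr.
  by rewrite mulVf ?scale1r ?pnatr_eq0.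
by rewrite -(scaler0 _ (2^-1 : R)); apply: ble_scale sum_ge0; rewrite invr_ge0 ler0n.
Qed.

Lemma babs_babs_le x : ble L (babs L (babs L x)) (babs L x).
Proof.
apply: bjoin_lub; first exact: ble_refl.
apply: ble_trans (babs_ge0 x).
by have := ble_add (- babs L x) (babs_ge0 x); rewrite add0r subrr.
Qed.

Lemma dle_trans (f g h : E -> R) : dle L f g -> dle L g h -> dle L f h.
Proof. by move=> fg gh z z_ge0; exact: le_trans (fg z z_ge0) (gh z z_ge0). Qed.

Section Modulus.
Variables (f h : E -> R).
Hypothesis h_dabs : is_dabs L f h.

Lemma dabs_ge0 z : ble L 0 z -> 0 <= h z.
Proof.
case: h_dabs => _ f_le_h Nf_le_h _ z_ge0.
by have := f_le_h z z_ge0; have := Nf_le_h z z_ge0 => /=; lra.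
Qed.

Lemma dabs_le x y : ble L x y -> h x <= h y.
Proof.
move=> /ble_subr_ge0/dabs_ge0; case: h_dabs => h_dual _ _ _.
by rewrite is_dualB // subr_ge0.
Qed.

Lemma norm_dual_le_dabs x : is_dual f -> `|f x| <= h (babs L x).
Proof.
move=> f_dual; case: h_dabs => h_dual f_le_h Nf_le_h _.
have := f_le_h _ (babsDr_ge0 x); have := f_le_h _ (babsBr_ge0 x).
have := Nf_le_h _ (babsDr_ge0 x); have := Nf_le_h _ (babsBr_ge0 x) => /=.
rewrite !(is_dualD f_dual) !(is_dualD h_dual) !(is_dualN f_dual) !(is_dualN h_dual).
rewrite ler_norml; lra.
Qed.

Lemma dabs_dabs : is_dabs L h h.
Proof. by case: (h_dabs) => h_dual _ _ _; split=> // z /dabs_ge0 /=; lra. Qed.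

Lemma dabs_dle h' : is_dabs L f h' -> dle L h h'.
Proof. by case: h_dabs => _ _ _ h_least [h'_dual f_le_h' Nf_le_h' _]; exact: h_least. Qed.

End Modulus.

Lemma ddisjoint_dabs f g hf hg :
  is_dabs L f hf -> is_dabs L g hg -> ddisjoint L f g -> ddisjoint L hf hg.
Proof.
move=> hf_dabs hg_dabs [hf' [hg' [hf'_dabs hg'_dabs disj]]].
exists hf, hg; split; [exact: dabs_dabs hf_dabs | exact: dabs_dabs hg_dabs |].
move=> k k_dual k_le_hf k_le_hg; apply: disj => //.
  exact: dle_trans k_le_hf (dabs_dle hf_dabs hf'_dabs).
exact: dle_trans k_le_hg (dabs_dle hg_dabs hg'_dabs).
Qed.

(* [ddisjoint] includes the existence of the moduli. *)
Lemma disjoint_seq_dabs xs : disjoint_seq L xs ->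
  exists2 hs, (forall n, is_dabs L (xs n) (hs n)) & disjoint_seq L hs.
Proof.
move=> xs_disj.
have /choice [hs hs_dabs] : forall n, exists h, is_dabs L (xs n) h.
  by move=> n; have [h [_ [h_dabs _ _]]] := xs_disj n n.+1 (@n_Sn n); exists h.
exists hs => // n m nm; exact: ddisjoint_dabs (hs_dabs n) (hs_dabs m) (xs_disj n m nm).
Qed.

End BanachLattice.

Lemma ultra_fmap_cluster_cvg (T : Type) (U : topologicalType) (F : set_system T)
    (f : T -> U) (p : U) :
  UltraFilter F -> cluster (f @ F) p -> f @ F --> p.
Proof.
move=> F_ultra p_cl N Np.
have [//|F_nN] := in_ultra_setVsetC (f @^-1` N) F_ultra.
by have [x [nNx Nx]] := p_cl (~` N) N F_nN Np; case: (nNx Nx).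
Qed.

Lemma initial_cvgP (S : choiceType) (T : topologicalType) (f : S -> T)
    (F : set_system S) (s : S) :
  Filter F -> F --> (s : initial_topology f) <-> f @ F --> f s.
Proof.
move=> FF; split=> [F_s A /initial_continuous|f_fs A]; first exact: F_s.
rewrite /= nbhsE => -[B [[C C_open <-] Cfs] BA].
by apply: filterS BA _; apply: f_fs; exact: open_nbhs_nbhs.
Qed.

Lemma ptws_cvgP (I : Type) (V : topologicalType) (F : set_system (I -> V))
    (f : I -> V) :
  Filter F -> F --> (f : {ptws I -> V}) <-> forall i, (fun g => g i) @ F --> f i.
Proof.
move=> FF; rewrite (@cvg_sup _ I
  (fun i => Topological.class (initial_topology (fun g : I -> V => g i)))) //.
by split=> F_f i; apply/(initial_cvgP _ _ FF)/F_f.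
Qed.

Section C0.
Variable R : realType.
Implicit Types (u v w x : nat -> R) (a : l1 R).

Lemma c0weak_cvgP (F : set_system (nat -> R)) {FF : Filter F} (w : c0weak R) :
  F --> w <-> forall a, (fun v => c0_pairing v a) @ F --> c0_pairing w a.
Proof.
apply: (iff_trans (initial_cvgP _ _ FF)).
exact: (ptws_cvgP _ (fmap_filter _ _)).
Qed.

Lemma c0set_bounded u : c0set u -> exists M, forall n, `|u n| <= M.
Proof.
move=> u0; have /cvg_seq_bounded[M [_ /(_ (`|M| + 1))]] : cvgn u.
  by apply/cvg_ex; exists 0.
rewrite (le_lt_trans (ler_norm _)) ?ltrDl // => /(_ erefl) uM.
by exists (`|M| + 1) => n; exact: uM.
Qed.

Lemma c0set_dominated u w : c0set u -> (forall n, `|w n| <= u n) -> c0set w.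
Proof.
move=> /cvgrPdist_le u0 w_le; apply/cvgrPdist_le => e /u0.
apply: filterS => k; rewrite !sub0r !normrN; apply: le_trans.
exact: le_trans (w_le k) (ler_norm _).
Qed.

Lemma is_cvg_series_mul_bounded (b x : nat -> R) M :
  cvgn (series (fun n => `|b n|)) -> (forall n, `|x n| <= M) ->
  cvgn (series (fun n => b n * x n)).
Proof.
move=> b_abs x_le; apply: normed_cvg.
apply: (@series_le_cvg _ _ (M *: (fun n => `|b n|))) => [n|n|n|].
- exact: normr_ge0.
- by rewrite /= mulr_ge0 // (le_trans _ (x_le n)).
- by rewrite /= normrM mulrC ler_wpM2r.
- exact: is_cvg_seriesZ.
Qed.

Lemma series_delta u n m : (n < m)%N -> series (fun k => (k == n)%:R * u k) m = u n.
Proof.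
move=> nm; rewrite /series /=.
under eq_bigr do rewrite mulr_natl mulrb.
by rewrite -big_mkcond big_nat1_eq leq0n nm.
Qed.

Lemma c0_pairing_delta n : exists a, forall u, c0_pairing u a = u n.
Proof.
have delta_near u : \forall m \near \oo, series (fun k => (k == n)%:R * u k) m = u n.
  by apply: filterS (nbhs_infty_gt n) => m; exact: series_delta.
have delta_l1 : cvgn (series (fun k => `|(k == n)%:R : R|)).
  have -> : (fun k => `|(k == n)%:R : R|) = (fun k => (k == n)%:R * 1).
    by apply/funext => k; rewrite normr_nat mulr1.
  by apply/cvg_ex; exists 1; exact: cvg_near_cst (delta_near _).
exists (exist _ (fun k => (k == n)%:R) delta_l1) => u; apply: cvg_lim => //.
exact: cvg_near_cst.
Qed.

Lemma c0weak_cvg_coord (F : set_system (nat -> R)) {FF : Filter F} (w : c0weak R) n :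
  F --> w -> (fun v => v n) @ F --> w n.
Proof.
move=> /c0weak_cvgP F_w; have [a a_delta] := c0_pairing_delta n.
have := F_w a; rewrite a_delta.
by under eq_fun do rewrite a_delta.
Qed.

Lemma ultra_cvg_dominated (T : Type) (F : set_system T) (f g : T -> R) (c : R) :
  UltraFilter F -> g @ F --> c -> (\forall t \near F, `|f t| <= g t) ->
  exists2 l, f @ F --> l & `|l| <= c.
Proof.
move=> F_ultra g_c f_le_g.
have /cvgrPdist_le/(_ 1 ltr01) g_near := g_c.
have f_seg : (f @ F) `[- (c + 1), c + 1]%classic.
  apply: filterS2 f_le_g g_near => t f_le; rewrite ler_norml => /andP[g_lb g_ub].
  by rewrite /= in_itv /= -ler_norml (le_trans f_le) //; lra.
have [l [_ l_cl]] := segment_compact _ f_seg.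
have f_l := ultra_fmap_cluster_cvg F_ultra l_cl.
exists l => //; rewrite -subr_le0.
apply: cvgr_to_le (cvgB (cvg_norm f_l) g_c) _.
by apply: filterS f_le_g => t; rewrite subr_le0.
Qed.

Definition tail_from (N : nat) (g : nat -> R) : nat -> R :=
  fun k => if (N <= k)%N then g k else 0.

Lemma series_tail_from N g M :
  (N <= M)%N -> series (tail_from N g) M = series g M - series g N.
Proof.
move=> NM; rewrite sub_series_geq // /series /= (@big_cat_nat _ _ _ N) //=.
rewrite big_nat big1 ?add0r => [|k /andP[_ kN]]; last by rewrite /tail_from leqNgt kN.
by apply: eq_big_nat => k /andP[Nk _]; rewrite /tail_from Nk.
Qed.

Lemma cvg_series_tail_from N g : cvgn (series g) ->
  series (tail_from N g) @ \oo --> limn (series g) - series g N.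
Proof.
move=> g_cvg; apply: cvg_trans (cvgB g_cvg (cvg_cst (series g N))).
apply: near_eq_cvg; apply: filterS (nbhs_infty_ge N) => M NM.
by rewrite series_tail_from.
Qed.

Lemma l1_tail_subproof a N :
  cvgn (series (fun n => `|tail_from N (fun k => `|sval a k|) n|)).
Proof.
apply: (@series_le_cvg _ _ (fun n => `|sval a n|)) => [n|n|n|]; last exact: svalP a.
- exact: normr_ge0.
- exact: normr_ge0.
- by rewrite /tail_from; case: ifP; rewrite ?normr_id ?normr0.
Qed.

Definition l1_tail a N : l1 R :=
  exist _ (tail_from N (fun k => `|sval a k|)) (@l1_tail_subproof a N).

Lemma c0_pairing_tail_small a u : c0set u ->
  forall e, 0 < e -> exists N, c0_pairing u (l1_tail a N) <= e.
Proof.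
move=> /c0set_bounded[M u_le] e e_gt0; case: a => a a_l1.
pose g n := `|a n| * u n.
have g_cvg : cvgn (series g).
  by apply: is_cvg_series_mul_bounded u_le; under eq_fun do rewrite normr_id.
have /cvgrPdist_le/(_ e e_gt0)[N _ N_le] := g_cvg.
exists N; rewrite /c0_pairing /=.
have -> : (fun n => tail_from N (fun k => `|a k|) n * u n) = tail_from N g.
  by apply/funext => n; rewrite /tail_from; case: ifP; rewrite ?mul0r.
rewrite (cvg_lim _ (cvg_series_tail_from (N := N) g_cvg)) //.
by have := N_le N (leqnn N); rewrite ler_norml => /andP[_ ->].
Qed.

Lemma cvg_series_coord (F : set_system (nat -> R)) (a w : nat -> R) :
  Filter F -> (forall n, (fun v => v n) @ F --> w n) ->
  forall N, (fun v => series (fun n => a n * (v n - w n)) N) @ F --> 0.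
Proof.
move=> FF v_w; elim=> [|N IH].
  by apply: cvg_near_cst; apply: nearW => v; rewrite /series /= big_geq.
under eq_fun do rewrite seriesSr.
rewrite -[0]addr0; apply: cvgD => //.
rewrite -(mulr0 (a N)); apply: cvgM; first exact: cvg_cst.
by rewrite -(subrr (w N)); apply: cvgB => //; exact: cvg_cst.
Qed.

Lemma series_mul_sub_le (a v w p q : nat -> R) N M : (N <= M)%N ->
  (forall n, `|v n| <= p n) -> (forall n, `|w n| <= q n) ->
  `|series (fun n => a n * v n) M - series (fun n => a n * w n) M| <=
  `|series (fun n => a n * (v n - w n)) N|
  + series (fun n => tail_from N (fun k => `|a k|) n * p n) M
  + series (fun n => tail_from N (fun k => `|a k|) n * q n) M.
Proof.
move=> NM v_le w_le.
have -> : series (fun n => a n * v n) M - series (fun n => a n * w n) M =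
    series (fun n => a n * (v n - w n)) N
    + series (tail_from N (fun n => a n * (v n - w n))) M.
  rewrite series_tail_from // [RHS]addrC subrK /series /= -sumrB.
  by apply: eq_bigr => k _; rewrite mulrBr.
rewrite -addrA (le_trans (ler_normD _ _)) // lerD2l /series /= -big_split /=.
apply: le_trans (ler_norm_sum _ _ _) _; apply: ler_sum => k _.
rewrite /tail_from; case: ifP => _; last by rewrite normr0 !mul0r addr0.
rewrite normrM -mulrDr ler_wpM2l //.
exact: le_trans (ler_normB _ _) (lerD (v_le k) (w_le k)).
Qed.

Lemma c0_pairing_sub_le a v w p q N :
  c0set p -> c0set q -> (forall n, `|v n| <= p n) -> (forall n, `|w n| <= q n) ->
  `|c0_pairing v a - c0_pairing w a| <=
  `|series (fun n => sval a n * (v n - w n)) N|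
  + c0_pairing p (l1_tail a N) + c0_pairing q (l1_tail a N).
Proof.
move=> /c0set_bounded[Mp p_le] /c0set_bounded[Mq q_le] v_le w_le.
have le_bound x y M : (forall n, `|x n| <= y n) -> (forall n, `|y n| <= M) ->
    forall n, `|x n| <= M.
  by move=> x_le y_le n; exact: le_trans (x_le n) (le_trans (ler_norm _) (y_le n)).
have pairing_cvg (b : l1 R) x M :
    (forall n, `|x n| <= M) -> cvgn (series (fun n => sval b n * x n)).
  by move=> x_le; apply: is_cvg_series_mul_bounded x_le; exact: svalP b.
have a_v := pairing_cvg a v Mp (le_bound _ _ _ v_le p_le).
have a_w := pairing_cvg a w Mq (le_bound _ _ _ w_le q_le).
have tail_p := pairing_cvg (l1_tail a N) p Mp p_le.
have tail_q := pairing_cvg (l1_tail a N) q Mq q_le.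
rewrite -!lerBlDr.
apply: cvgr_to_le (cvgB (cvgB (cvg_norm (cvgB a_v a_w)) tail_q) tail_p) _.
apply: filterS (nbhs_infty_ge N) => M NM.
by have := series_mul_sub_le (sval a) NM v_le w_le; rewrite !fctE /=; lra.
Qed.

Lemma cvg_c0_pairing_dominated (F : set_system (nat -> R))
    (U : (nat -> R) -> nat -> R) u w :
  Filter F -> c0set u -> (forall n, `|w n| <= u n) ->
  (\forall v \near F, c0set (U v) /\ forall n, `|v n| <= U v n) ->
  (forall n, (fun v => v n) @ F --> w n) ->
  (forall b, (fun v => c0_pairing (U v) b) @ F --> c0_pairing u b) ->
  forall a, (fun v => c0_pairing v a) @ F --> c0_pairing w a.
Proof.
move=> FF u_c0 w_le U_dom v_w Uv_u a.
apply/cvgrPdist_le => e e_gt0; have e4_gt0 : 0 < e / 4 by rewrite divr_gt0.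
have [N tail_le] := c0_pairing_tail_small a u_c0 e4_gt0.
have /cvgrPdist_le/(_ _ e4_gt0) head_near := cvg_series_coord (sval a) FF v_w N.
have /cvgrPdist_le/(_ _ e4_gt0) tail_near := Uv_u (l1_tail a N).
apply: filterS3 U_dom head_near tail_near => v [Uv_c0 v_le] head tail.
move: head tail; rewrite sub0r normrN => head; rewrite ler_norml => /andP[tail_lb _].
by rewrite distrC; have := c0_pairing_sub_le a N Uv_c0 u_c0 v_le w_le; lra.
Qed.

(* For K of nonnegative sequences, this is the solid hull of K in c0. *)
Definition c0_dominated (K : set (nat -> R)) : set (nat -> R) :=
  [set v | c0set v /\ exists2 u, K u & forall n, `|v n| <= u n].

Lemma compact_c0_dominated (K : set (c0weak R)) :
  K `<=` @c0set R -> compact K -> compact (c0_dominated K : set (c0weak R)).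
Proof.
move=> K_c0 K_compact; rewrite compact_ultra => F F_ultra F_dom.
have /choice[U U_dom] : forall v, exists u,
    c0_dominated K v -> K u /\ forall n, `|v n| <= u n.
  move=> v; have [[_ [u Ku v_le]]|not_dom] := pselect (c0_dominated K v).
    by exists u.
  by exists v => /not_dom.
have F_UK : F (U @^-1` K) by apply: filterS F_dom => v /U_dom[].
have [u [Ku u_cl]] := K_compact (U @ F) _ F_UK.
have U_u : U @ F --> (u : c0weak R) := ultra_fmap_cluster_cvg F_ultra u_cl.
have U_dom_near : \forall v \near F, c0set (U v) /\ forall n, `|v n| <= U v n.
  by apply: filterS F_dom => v /U_dom[KUv v_le]; split; [exact: K_c0|].
have /choice[w w_coord] : forall n, exists w_n,
    (fun v => v n) @ F --> w_n /\ `|w_n| <= u n.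
  move=> n; have [w_n v_w w_le] := ultra_cvg_dominated F_ultra
    (c0weak_cvg_coord (n := n) U_u) (filterS (fun v dom => proj2 dom n) U_dom_near).
  by exists w_n.
exists w; split.
  split; first exact: c0set_dominated (K_c0 _ Ku) (fun n => (w_coord n).2).
  by exists u => // n; exact: (w_coord n).2.
apply/c0weak_cvgP; apply: (cvg_c0_pairing_dominated _ (K_c0 _ Ku)) U_dom_near _ _.
- by move=> n; exact: (w_coord n).2.
- by move=> n; exact: (w_coord n).1.
- by move: U_u => /c0weak_cvgP.
Qed.

End C0.

Section AlmostGrothendieck.
Variables (R : realType) (E : completeNormedModType R) (L : BLat E).

Lemma almost_grothendieckS (A B : set E) :
  A `<=` B -> almost_grothendieck L B -> almost_grothendieck L A.
Proof.
move=> AB B_ag xs xs_dual xs_null xs_disj.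
have [K [K_c0 K_compact BK]] := B_ag xs xs_dual xs_null xs_disj.
by exists K; split=> //; apply: subset_trans BK; exact: image_subset.
Qed.

Lemma babs_image_sub_sol (A : set E) : babs L @` A `<=` sol L A.
Proof. by move=> _ [y Ay <-]; exists y => //; exact: babs_babs_le. Qed.

Lemma dual_image_sol_dominated (xs hs : nat -> E -> R) (A : set E) (K : set (nat -> R)) :
  (forall n, is_dual (xs n)) -> (forall n, is_dabs L (xs n) (hs n)) ->
  weak_star_null xs ->
  [set (fun n => hs n x) | x in babs L @` A] `<=` K ->
  [set (fun n => xs n x) | x in sol L A] `<=` c0_dominated K.
Proof.
move=> xs_dual hs_dabs xs_null absA_K _ [x [y Ay x_le_y] <-].
split; first exact: xs_null.
exists (fun n => hs n (babs L y)); first by apply: absA_K; exists (babs L y) => //; exists y.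
move=> n; apply: le_trans (norm_dual_le_dabs (hs_dabs n) x (xs_dual n)) _.
exact: (dabs_le (hs_dabs n) x_le_y).
Qed.

End AlmostGrothendieck.

Theorem mainTheorem2 (R : realType) (E : completeNormedModType R) (L : BLat E)
  (hd : property_d L) (A : set E) :
  almost_grothendieck L (babs L @` A) <-> almost_grothendieck L (sol L A).
Proof.
split=> [absA_ag xs xs_dual xs_null xs_disj|]; last first.
  exact/almost_grothendieckS/babs_image_sub_sol.
have [hs hs_dabs hs_disj] := disjoint_seq_dabs xs_disj.
have hs_dual n : is_dual (hs n) by case: (hs_dabs n).
have hs_null : weak_star_null hs := hd xs xs_dual xs_null xs_disj hs hs_dabs.
have [K [K_c0 K_compact absA_K]] := absA_ag hs hs_dual hs_null hs_disj.
exists (c0_dominated K); split; first by move=> v [].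
  exact: compact_c0_dominated.
exact: dual_image_sol_dominated absA_K.
Qed.
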